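(* In the setting below, suppose $M_i(1)=M_i(0)$ for all $i$, and let $\alpha\in(0,1/2)$. Suppose $\mathcal I^\alpha_{\texttt o,k}$, $1\le k\le|\mathcal S|$, are random sets (functions of the observed data), each of the form $(c,\infty)$ or $[c,\infty)$ for some $c\in\overline{\mathbb R}$, such that $\mathbb P(\tau_{\texttt o(k)}\in\mathcal I^\alpha_{\texttt o,k}\text{ for all }1\le k\le|\mathcal S|)\ge1-2\alpha$. Define $\mathcal I^\alpha_{k,\texttt{sharp}}=\mathbb R$ for $1\le k\le|\mathcal S^\complement|$ and $\mathcal I^\alpha_{k,\texttt{sharp}}=\mathcal I^\alpha_{\texttt o,k-|\mathcal S^\complement|}$ for $|\mathcal S^\complement|+1\le k\le n$. Then $\mathbb P(\tau_{(k)}\in\mathcal I^\alpha_{k,\texttt{sharp}}\text{ for all }1\le k\le n)\ge1-2\alpha$.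
   Context: There are $n$ units with fixed potential outcomes $Y_i^\star(0),Y_i^\star(1)\in\mathbb R$ and fixed potential missingness indicators $M_i(0),M_i(1)\in\{0,1\}$; $\tau_i=Y_i^\star(1)-Y_i^\star(0)$. $\boldsymbol Z\in\{0,1\}^n$ is uniform over vectors with exactly $n_1$ ones ($n_1,n_0\ge1$ fixed, $n_1+n_0=n$), independent of all potential quantities. $M_i=Z_iM_i(1)+(1-Z_i)M_i(0)$; $\mathcal S=\{i:M_i=1\}$ (fixed under $M_i(1)=M_i(0)$), $\mathcal S^\complement$ its complement. $\tau_{(1)}\le\dots\le\tau_{(n)}$ are the sorted individual effects of all units and $\tau_{\texttt o(1)}\le\dots\le\tau_{\texttt o(|\mathcal S|)}$ the sorted individual effects of units in $\mathcal S$. $\overline{\mathbb R}=\mathbb R\cup\{\pm\infty\}$. *)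

From HB Require Import structures.
From mathcomp Require Import all_boot all_order all_algebra.
From mathcomp Require Import reals constructive_ereal.
Set Implicit Arguments. Unset Strict Implicit. Unset Printing Implicit Defensive.
Import Order.TTheory GRing.Theory Num.Theory.
Local Open Scope ring_scope.

(* A treatment assignment Z in {0,1}^n. *)
Definition assign (n : nat) := {ffun 'I_n -> bool}.

Definition valid_assign (n n1 : nat) (z : assign n) : bool :=
  #|[pred i | z i]| == n1.

Definition Pr (R : realType) (n n1 : nat) (E : pred (assign n)) : R :=
  (#|[pred z : assign n | valid_assign n1 z && E z]|%:R) / (#|[pred z : assign n | valid_assign n1 z]|%:R).

(* k-th smallest (1-indexed) of the values tau i, i in A. *)
Definition order_stat (R : realType) (n : nat) (tau : 'I_n -> R)
    (A : {set 'I_n}) (k : nat) : R :=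
  nth 0 (sort (fun x y : R => x <= y) [seq tau i | i <- enum A]) k.-1.

(* A set of the form (c, oo) (strict = true) or [c, oo) (strict = false),
   c in \bar R, given as a boolean membership predicate on R. *)
Definition upper_set (R : realType) (cs : \bar R * bool) : pred R :=
  fun x => if cs.2 then (cs.1 < x%:E)%E else (cs.1 <= x%:E)%E.

Definition I_sharp (R : realType) (n : nat) (S : {set 'I_n})
    (Io : nat -> \bar R * bool) (k : nat) : pred R :=
  if (k <= #|~: S|)%N then (fun _ => true) else upper_set (Io (k - #|~: S|)%N).

From HB Require Import structures.
From mathcomp Require Import all_boot all_order all_algebra.
From mathcomp Require Import reals constructive_ereal.
Import Order.TTheory GRing.Theory Num.Theory.
Local Open Scope ring_scope.

(* With fixed missingness, S is deterministic and the bound is an event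
   inclusion. Adding m values to a list raises the rank of each old value by
   at most m, so the k-th smallest effect over S is at most the
   (k + |S^c|)-th smallest over all units. Each observed interval is upward
   closed, so whenever it covers tau_o(k) it also covers
   tau_(k + |S^c|); the remaining sharp intervals are all of R. *)

Lemma nth_sort_le_sort_cat {d} {T : orderType d} (x0 : T) (s u : seq T) j :
  (j < size s)%N ->
  (nth x0 (sort <=%O s) j <= nth x0 (sort <=%O (s ++ u)) (j + size u))%O.
Proof.
move=> lt_js; set x := nth x0 (sort <=%O s) j.
have count_lt_x : (count (< x)%O s <= j)%N.
  rewrite -(count_sort <=%O) leqNgt; apply/negP.
  by move/(nth_count_lt x0 (sort_le_sorted s)); rewrite ltxx.
apply: nth_count_ge; first exact: sort_le_sorted.
rewrite count_sort count_cat size_sort size_cat ltn_add2r lt_js.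
by rewrite leq_add // count_size.
Qed.

Lemma order_stat_le_superset {R : realType} {n : nat} (tau : 'I_n -> R)
    (A B : {set 'I_n}) k :
  A \subset B -> (0 < k <= #|A|)%N ->
  order_stat tau A k <= order_stat tau B (k + #|B :\: A|).
Proof.
move=> sAB /andP[k_gt0 le_kA]; rewrite /order_stat.
have permB : perm_eq [seq tau i | i <- enum B]
    ([seq tau i | i <- enum A] ++ [seq tau i | i <- enum (B :\: A)]).
  rewrite -map_cat; apply/perm_map/uniq_perm; rewrite ?enum_uniq //.
    rewrite cat_uniq !enum_uniq andbT /=; apply/hasPn => i.
    by rewrite !mem_enum in_setD => /andP[].
  move=> i; rewrite mem_cat !mem_enum in_setD.
  by case: (boolP (i \in A)) => //= /(subsetP sAB) ->.
have -> : ((k + #|B :\: A|).-1 = k.-1 + size [seq tau i | i <- enum (B :\: A)])%N.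
  by rewrite size_map -cardE -!subn1 addnBAC.
rewrite (perm_sort_leP _ _ permB).
by apply: nth_sort_le_sort_cat; rewrite size_map -cardE prednK.
Qed.

Lemma upper_set_le {R : realType} (cs : \bar R * bool) (x y : R) :
  upper_set cs x -> x <= y -> upper_set cs y.
Proof.
case: cs => c [] /= + le_xy; rewrite /upper_set /= => h.
  by apply: (lt_le_trans h); rewrite lee_fin.
by apply: (le_trans h); rewrite lee_fin.
Qed.

Lemma le_Pr {R : realType} {n : nat} (n1 : nat) (E F : pred (assign n)) :
  (forall z, E z -> F z) -> Pr R n1 E <= Pr R n1 F.
Proof.
move=> EF; rewrite /Pr ler_wpM2r ?invr_ge0 ?ler0n // ler_nat.
by apply/subset_leq_card/subsetP => z; rewrite !inE => /andP[-> /EF].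
Qed.

Lemma sharp_bounds_of_observed_bounds {R : realType} {n : nat} (tau : 'I_n -> R)
    (S : {set 'I_n}) (Io : nat -> \bar R * bool) :
  all (fun k => upper_set (Io k) (order_stat tau S k)) (iota 1 #|S|) ->
  all (fun k => I_sharp S Io k (order_stat tau setT k)) (iota 1 n).
Proof.
move=> /allP observed; apply/allP => k; rewrite mem_iota => /andP[k_gt0 lt_kn].
rewrite /I_sharp; case: leqP => // lt_Sc_k.
have card_split : (#|S| + #|~: S| = n)%N by rewrite cardsC card_ord.
have k'_range : (0 < k - #|~: S| <= #|S|)%N.
  by rewrite subn_gt0 lt_Sc_k leq_subLR addnC card_split -ltnS -add1n.
apply: upper_set_le (observed _ _) _; first by rewrite mem_iota add1n ltnS.
have := order_stat_le_superset tau _ _ _ (subsetT S) k'_range.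
by rewrite setTD subnK // ltnW.
Qed.

Theorem corollary1 (R : realType) (n n1 : nat)
  (Y0 Y1 : 'I_n -> R) (M0 M1 : 'I_n -> bool)
  (alpha : R)
  (Io : assign n -> nat -> \bar R * bool) :
  (0 < n1)%N -> (n1 < n)%N ->
  (forall i, M1 i = M0 i) ->
  0 < alpha -> alpha < 1 / 2 ->
  let tau := fun i => Y1 i - Y0 i in
  let S := [set i | M0 i] in
  1 - 2 * alpha <=
    Pr R n1 (fun z => all (fun k => upper_set (Io z k) (order_stat tau S k))
                          (iota 1 #|S|)) ->
  1 - 2 * alpha <=
    Pr R n1 (fun z => all (fun k => I_sharp S (Io z) k (order_stat tau setT k))
                          (iota 1 n)).
Proof.
move=> _ _ _ _ _ tau S observed_coverage.
apply: (le_trans observed_coverage); apply: le_Pr => z.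
exact: sharp_bounds_of_observed_bounds.
Qed.
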